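(* Let $A\in N_n$ be a Belitskii canonical form under $B_n$-similarity. If $Q\in M_n(\mathbb F)$ is a subpermutation such that $A\in B_nQB_n=\{BQB': B,B'\in B_n\}$, then $A\in QU_n=\{QU:U\in U_n\}$.
   Context: $\mathbb F$ is a field. $B_n$ (resp. $U_n$, $N_n$) denotes the set of $n\times n$ invertible upper triangular (resp. upper triangular with all diagonal entries $1$, strictly upper triangular) matrices over $\mathbb F$. Matrices $A,C$ are $G$-similar for a group $G$ if $C=BAB^{-1}$ for some $B\in G$. A subpermutation is a matrix each of whose rows and columns has at most one nonzero entry, and that entry equals $1$. Belitskii order: on positions $\{(i,j):1\le i<j\le n\}$ define $(i,j)\prec(i',j')$ iff $i>i'$, or $i=i'$ and $j<j'$; thus $(n-1,n)\prec(n-2,n-1)\prec(n-2,n)\prec(n-3,n-2)\prec\cdots\prec(1,n)$. Belitskii's algorithm for $B_n$-similarity on $N_n$: given $A\in N_n$ put $A^{(0)}=A$, $G^{(0)}=B_n$. For $k=0,1,\dots$, let $(p,q)$ be the $(k+1)$th position in the Belitskii order and look at the $(p,q)$ entries of all matrices $G^{(k)}$-similar to $A^{(k)}$: (a) if this entry is always $0$, or can take every value in $\mathbb F$, choose $A^{(k+1)}$ $G^{(k)}$-similar to $A^{(k)}$ with $(p,q)$ entry $0$; (b) if it can take exactly the values in $\mathbb F\setminus\{0\}$, choose $A^{(k+1)}$ $G^{(k)}$-similar to $A^{(k)}$ with $(p,q)$ entry $1$; (c) otherwise the entry is a constant $\lambda\ne0$, and $A^{(k+1)}=A^{(k)}$.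 Let $G^{(k+1)}$ be the subgroup of $g\in G^{(k)}$ such that $gA^{(k+1)}g^{-1}$ has the same entries as $A^{(k+1)}$ in the first $k+1$ positions. After the last position, the resulting matrix $A^\infty$ is the Belitskii canonical form of $A$ under $B_n$-similarity. A matrix in $N_n$ is called a Belitskii canonical form if it is the Belitskii canonical form of some matrix in $N_n$. *)

From HB Require Import structures.
From mathcomp Require Import all_boot all_order all_algebra.
Set Implicit Arguments. Unset Strict Implicit. Unset Printing Implicit Defensive.
Import GRing.Theory.
Local Open Scope ring_scope.

Section Belitskii.
Variables (F : fieldType) (n : nat).

Definition inB (B : 'M[F]_n) : Prop :=
  B \in unitmx /\ forall i j : 'I_n, (j < i)%N -> B i j = 0.

Definition inU (U : 'M[F]_n) : Prop :=
  (forall i j : 'I_n, (j < i)%N -> U i j = 0) /\ forall i : 'I_n, U i i = 1.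

Definition inN (A : 'M[F]_n) : Prop :=
  forall i j : 'I_n, (j <= i)%N -> A i j = 0.

Definition subperm_mx (Q : 'M[F]_n) : Prop :=
  (forall i j, Q i j = 0 \/ Q i j = 1) /\
  (forall i j j', Q i j != 0 -> Q i j' != 0 -> j = j') /\
  (forall i i' j, Q i j != 0 -> Q i' j != 0 -> i = i').

Definition gsim (G : 'M[F]_n -> Prop) (A C : 'M[F]_n) : Prop :=
  exists g, G g /\ C = g *m A *m invmx g.

Definition bel_positions : seq ('I_n * 'I_n) :=
  [seq (i, j) | i : 'I_n <- rev (enum 'I_n), j : 'I_n <- filter (fun j : 'I_n => (i < j)%N) (enum 'I_n)].

(* A run of Belitskii's algorithm on A, with matrices As k = A^(k) and
   groups Gs k = G^(k), ending with the matrix Ainf. *)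
Definition belitskii_run (A : 'M[F]_n) (As : nat -> 'M[F]_n)
    (Gs : nat -> 'M[F]_n -> Prop) (Ainf : 'M[F]_n) : Prop :=
  As 0%N = A /\ (forall g, Gs 0%N g <-> inB g) /\
  (forall (k : nat) (p q : 'I_n), onth bel_positions k = Some (p, q) ->
     let vals := fun x : F => exists C, gsim (Gs k) (As k) C /\ C p q = x in
     ( ((forall x, vals x -> x = 0) \/ (forall x, vals x)) ->
         gsim (Gs k) (As k) (As k.+1) /\ As k.+1 p q = 0 ) /\
     ( ~ ((forall x, vals x -> x = 0) \/ (forall x, vals x)) ->
       (forall x, vals x <-> x != 0) ->
         gsim (Gs k) (As k) (As k.+1) /\ As k.+1 p q = 1 ) /\
     ( ~ ((forall x, vals x -> x = 0) \/ (forall x, vals x)) ->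
       ~ (forall x, vals x <-> x != 0) ->
         As k.+1 = As k ) /\
     (forall g, Gs k.+1 g <->
        (Gs k g /\ forall p' q', (p', q') \in take k.+1 bel_positions ->
           (g *m As k.+1 *m invmx g) p' q' = As k.+1 p' q'))) /\
  Ainf = As (size bel_positions).

Definition belitskii_canonical (Ainf : 'M[F]_n) : Prop :=
  exists A As Gs, inN A /\ belitskii_run A As Gs Ainf.

End Belitskii.

(* The Belitskii algorithm reduces the first nonzero entry of each row (its
   leading entry) to 1, since scaling the row by a diagonal matrix reaches every
   nonzero value without disturbing earlier positions; and it kills every entry
   above a leading entry, since adding a multiple of the lower row reaches every
   value.  Hence a canonical form factors as A = P U with P the 0/1 pattern of
   leading entries, a subpermutation, and U unitriangular.  Finally, two
   subpermutations in the same double coset B_n Q B_n coincide: comparing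
   P C = B Q row by row from the bottom shows that the support of P lies in
   that of Q, and symmetrically. *)

From mathcomp Require Import all_boot all_order all_algebra.
From Stdlib Require Import Classical.
Set Implicit Arguments. Unset Strict Implicit. Unset Printing Implicit Defensive.
Import GRing.Theory.
Local Open Scope ring_scope.

Section UpperTriangular.
Variables (F : fieldType) (n : nat).
Implicit Types A B U X : 'M[F]_n.

Definition upper_mx B := forall i j : 'I_n, (j < i)%N -> B i j = 0.

Lemma upper_mxM A B : upper_mx A -> upper_mx B -> upper_mx (A *m B).
Proof.
move=> uA uB i j lt_ji; rewrite mxE big1 // => k _.
have [lt_ki | le_ik] := ltnP k i; first by rewrite uA ?mul0r.
by rewrite uB ?mulr0 // (leq_trans lt_ji le_ik).
Qed.

Lemma upper_unitmx_diag_neq0 B : upper_mx B -> B \in unitmx -> forall i, B i i != 0.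
Proof.
move=> uB; rewrite unitmxE -det_tr det_trig; last first.
  by apply/is_trig_mxP => i j lt_ij; rewrite mxE uB.
by rewrite unitfE => /prodf_neq0 nzB i; have := nzB i isT; rewrite mxE.
Qed.

Lemma upper_mx_inv B : upper_mx B -> B \in unitmx -> upper_mx (invmx B).
Proof.
move=> uB unitB.
suff col_zero m (i j : 'I_n) : (j < m)%N -> (j < i)%N -> invmx B i j = 0.
  by move=> i j; apply: col_zero.
elim: m i j => [|m IHm] i j //; rewrite ltnS leq_eqVlt => /orP[/eqP def_m lt_ji|]; last exact: IHm.
have := congr1 (fun M : 'M[F]_n => M i j) (mulVmx unitB).
rewrite !mxE (bigD1 j) //= big1 ?addr0; last first.
  move=> k neq_kj; have [lt_kj | lt_jk | /val_inj eq_kj] := ltngtP k j.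
  - by rewrite (IHm i k) ?mul0r -?def_m // (ltn_trans lt_kj lt_ji).
  - by rewrite uB ?mulr0.
  - by rewrite eq_kj eqxx in neq_kj.
rewrite -val_eqE /= gtn_eqF // => /eqP.
by rewrite mulf_eq0 (negbTE (upper_unitmx_diag_neq0 uB unitB j)) orbF => /eqP.
Qed.

Lemma inB_mul A B : inB A -> inB B -> inB (A *m B).
Proof.
by move=> [unitA uA] [unitB uB]; split; [rewrite unitmx_mul unitA | exact: upper_mxM].
Qed.

Lemma inB_inv B : inB B -> inB (invmx B).
Proof. by move=> [unitB uB]; split; [rewrite unitmx_inv | exact: upper_mx_inv]. Qed.

Lemma inU_inB U : inU U -> inB U.
Proof.
move=> [uU diagU]; split => //; rewrite unitmxE -det_tr det_trig; last first.
  by apply/is_trig_mxP => i j lt_ij; rewrite mxE uU.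
by rewrite unitfE; apply/prodf_neq0 => i _; rewrite mxE diagU oner_neq0.
Qed.

Lemma inN_neq0_lt X i j : inN X -> X i j != 0 -> (i < j)%N.
Proof. by move=> NX; apply: contraR; rewrite -leqNgt => /NX ->. Qed.

Lemma inN_conj g X : inB g -> inN X -> inN (g *m X *m invmx g).
Proof.
move=> Bg NX i j le_ji; have [_ ug'] := inB_inv Bg.
rewrite mxE big1 // => k _; rewrite mxE.
have [lt_jk | le_kj] := ltnP j k; first by rewrite ug' ?mulr0.
rewrite big1 ?mul0r // => l _.
have [lt_li | le_il] := ltnP l i; first by rewrite Bg.2 ?mul0r.
by rewrite NX ?mulr0 // (leq_trans le_kj (leq_trans le_ji le_il)).
Qed.

End UpperTriangular.

Section ElementaryMatrices.
Variables (F : fieldType) (n : nat).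
Implicit Types X : 'M[F]_n.

Lemma mulmx1_invmx (A B : 'M[F]_n) : A *m B = 1%:M -> invmx A = B.
Proof.
by move=> AB1; have [unitA _] := mulmx1_unit AB1; rewrite -[RHS](mulKmx unitA) AB1 mulmx1.
Qed.

Definition transvection (p r : 'I_n) (t : F) : 'M[F]_n := 1%:M + t *: delta_mx p r.

Lemma transvectionK (p r : 'I_n) t : p != r ->
  transvection p r t *m transvection p r (- t) = 1%:M.
Proof.
move=> neq_pr; rewrite /transvection mulmxDl !mulmxDr !mul1mx mulmx1 -scalemxAl.
by rewrite -scalemxAr mul_delta_mx_0 1?eq_sym // !scaler0 addr0 scaleNr subrK.
Qed.

Lemma invmx_transvection (p r : 'I_n) t : p != r ->
  invmx (transvection p r t) = transvection p r (- t).
Proof. by move/(transvectionK t)/mulmx1_invmx. Qed.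

Lemma transvection_inB (p r : 'I_n) t : (p < r)%N -> inB (transvection p r t).
Proof.
move=> lt_pr; have neq_pr : p != r by rewrite -val_eqE /= ltn_eqF.
split; first by have [] := mulmx1_unit (transvectionK t neq_pr).
move=> i j lt_ji; rewrite !mxE -[i == j]val_eqE /= gtn_eqF // add0r.
have [eq_ip | _] := eqVneq i p; last by rewrite mulr0.
have [eq_jr | _] := eqVneq j r; last by rewrite andbF mulr0.
by move: lt_ji; rewrite eq_ip eq_jr ltnNge (ltnW lt_pr).
Qed.

Lemma sum_delta_mxl (p r a b : 'I_n) X :
  \sum_j delta_mx p r a j * X j b = (a == p)%:R * X r b.
Proof.
rewrite (bigD1 r) //= big1 ?addr0 => [|k neq_kr]; rewrite mxE ?eqxx ?andbT //.
by rewrite (negbTE neq_kr) andbF mul0r.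
Qed.

Lemma sum_delta_mxr (p r a b : 'I_n) X :
  \sum_j X a j * delta_mx p r j b = X a p * (b == r)%:R.
Proof.
rewrite (bigD1 p) //= big1 ?addr0 => [|k neq_kp]; rewrite mxE ?eqxx //.
by rewrite (negbTE neq_kp) mulr0.
Qed.

Lemma conj_transvection (p r a b : 'I_n) t X : (p < r)%N -> inN X -> (p <= a)%N ->
  (transvection p r t *m X *m invmx (transvection p r t)) a b
    = X a b + (a == p)%:R * (t * X r b).
Proof.
move=> lt_pr NX le_pa; rewrite invmx_transvection; last by rewrite -val_eqE /= ltn_eqF.
rewrite /transvection mulmxDl mul1mx !mulmxDr mulmx1 -!scalemxAl -!scalemxAr !mxE.
rewrite sum_delta_mxr !mxE !sum_delta_mxl (NX a p le_pa) (NX r p (ltnW lt_pr)).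
by rewrite !mulr0 addr0 !mul0r mulr0 addr0 mulrCA.
Qed.

Definition scaling (p : 'I_n) (x : F) : 'M[F]_n := diag_mx (\row_i (if i == p then x else 1)).

Lemma scalingK (p : 'I_n) x : x != 0 -> scaling p x *m scaling p x^-1 = 1%:M.
Proof.
move=> nz_x; rewrite mulmx_diag; apply/matrixP => i j; rewrite !mxE.
by case: eqP; rewrite ?mulfV ?mulr1.
Qed.

Lemma invmx_scaling (p : 'I_n) x : x != 0 -> invmx (scaling p x) = scaling p x^-1.
Proof. by move/(scalingK p)/mulmx1_invmx. Qed.

Lemma scaling_inB (p : 'I_n) x : x != 0 -> inB (scaling p x).
Proof.
move=> nz_x; split; first by have [] := mulmx1_unit (scalingK p nz_x).
by move=> i j lt_ji; rewrite !mxE -[i == j]val_eqE /= gtn_eqF.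
Qed.

Lemma conj_scaling (p a b : 'I_n) x X : x != 0 ->
  (scaling p x *m X *m invmx (scaling p x)) a b
    = (if a == p then x else 1) * X a b * (if b == p then x^-1 else 1).
Proof. by move=> nz_x; rewrite invmx_scaling // mul_diag_mx mul_mx_diag !mxE. Qed.

End ElementaryMatrices.

Section SubpermutationMatrices.
Variables (F : fieldType) (n : nat).
Implicit Types P Q B C M : 'M[F]_n.

Lemma sum_neq0_exists (V : nmodType) (I : finType) (f : I -> V) :
  \sum_i f i != 0 -> exists i, f i != 0.
Proof.
move=> nz_sum; apply/existsP; apply: contraNT nz_sum => /existsPn f0.
by rewrite big1 // => i _; apply/eqP/negPn/f0.
Qed.

Lemma subperm_mx_eq1 Q i j : subperm_mx Q -> Q i j != 0 -> Q i j = 1.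
Proof. by case=> entries _ /eqP; case: (entries i j). Qed.

Lemma mulmx_subperm_row Q M i j l : subperm_mx Q -> Q i l != 0 -> (Q *m M) i j = M l j.
Proof.
move=> sQ Qil; rewrite mxE (bigD1 l) //= big1 ?addr0 => [|k neq_kl].
  by rewrite (subperm_mx_eq1 sQ Qil) mul1r.
have [-> | Qik] := eqVneq (Q i k) 0; first by rewrite mul0r.
by case: sQ => _ [row_uniq _]; rewrite (row_uniq i k l) ?eqxx in neq_kl.
Qed.

Lemma mulmx_subperm_col Q M i j l : subperm_mx Q -> Q l j != 0 -> (M *m Q) i j = M i l.
Proof.
move=> sQ Qlj; rewrite mxE (bigD1 l) //= big1 ?addr0 => [|k neq_kl].
  by rewrite (subperm_mx_eq1 sQ Qlj) mulr1.
have [-> | Qkj] := eqVneq (Q k j) 0; first by rewrite mulr0.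
by case: sQ => _ [_ col_uniq]; rewrite (col_uniq k l j) ?eqxx in neq_kl.
Qed.

Lemma subperm_mx_support_sub P Q B C : subperm_mx P -> subperm_mx Q -> inB C -> inB B ->
  P *m C = B *m Q -> forall i j, P i j != 0 -> Q i j != 0.
Proof.
move=> sP sQ [unitC uC] [unitB uB] PC_BQ.
suff support_sub d (i : 'I_n) : (n - i <= d)%N -> forall j, P i j != 0 -> Q i j != 0.
  by move=> i; apply: (support_sub n); rewrite leq_subr.
elim: d i => [|d IHd] i le_d j Pij.
  by move: le_d; rewrite leqn0 subn_eq0 leqNgt ltn_ord.
have : (B *m Q) i j != 0.
  by rewrite -PC_BQ (mulmx_subperm_row _ _ sP Pij) upper_unitmx_diag_neq0.
rewrite mxE => /sum_neq0_exists[i' /[!mulf_eq0] /norP[Bii' Qi'j]].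
have [lt_ii' | lt_i'i | /val_inj -> //] := ltngtP i i'; last by rewrite uB ?eqxx in Bii'.
(* Row [i'] of [P] meets column [j] through [P C = B Q]; by induction its pivot
   lies in [Q]'s row [i'], hence in column [j], clashing with [P i j]. *)
have : (P *m C) i' j != 0.
  by rewrite PC_BQ (mulmx_subperm_col _ _ sQ Qi'j) upper_unitmx_diag_neq0.
rewrite mxE => /sum_neq0_exists[j' /[!mulf_eq0] /norP[Pi'j' _]].
have Qi'j' : Q i' j' != 0.
  by apply: IHd Pi'j'; rewrite -ltnS (leq_trans _ le_d) // ltn_sub2l.
case: sQ => _ [row_uniqQ _]; case: sP => _ [_ col_uniqP].
rewrite -(row_uniqQ i' j j') // in Pi'j'.
by move: lt_ii'; rewrite (col_uniqP i i' j) ?ltnn.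
Qed.

Lemma subperm_mx_double_coset_eq P Q B C : subperm_mx P -> subperm_mx Q -> inB B -> inB C ->
  P *m C = B *m Q -> P = Q.
Proof.
move=> sP sQ BB BC PC_BQ.
have QC'_B'P : Q *m invmx C = invmx B *m P.
  by rewrite -[Q](mulKmx BB.1) -PC_BQ !mulmxA mulmxK //; case: BC.
have supp_PQ := subperm_mx_support_sub sP sQ BC BB PC_BQ.
have supp_QP := subperm_mx_support_sub sQ sP (inB_inv BC) (inB_inv BB) QC'_B'P.
apply/matrixP => i j; have [Pij | nz_Pij] := eqVneq (P i j) 0.
  by rewrite Pij; apply/esym/eqP/negPn/negP => /supp_QP; rewrite Pij eqxx.
by rewrite (subperm_mx_eq1 sP nz_Pij) (subperm_mx_eq1 sQ (supp_PQ _ _ nz_Pij)).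
Qed.

End SubpermutationMatrices.

Section LeadingEntries.
Variables (F : fieldType) (n : nat).
Implicit Types A : 'M[F]_n.

Definition leading (A : 'M[F]_n) (i j : 'I_n) : bool :=
  (A i j != 0) && [forall c : 'I_n, (c < j)%N ==> (A i c == 0)].

Lemma leadingP A i j :
  reflect (A i j != 0 /\ forall c : 'I_n, (c < j)%N -> A i c = 0) (leading A i j).
Proof.
apply: (iffP andP) => [[nz_Aij /forallP zero_before] | [nz_Aij zero_before]].
  by split=> // c lt_cj; apply/eqP; have /implyP := zero_before c; apply.
by split=> //; apply/forallP => c; apply/implyP => /zero_before ->.
Qed.

Lemma leading_row_uniq A i j j' : leading A i j -> leading A i j' -> j = j'.
Proof.
move=> /leadingP[nz_j before_j] /leadingP[nz_j' before_j'].
have [lt_jj' | lt_j'j | /val_inj //] := ltngtP j j'.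
  by rewrite before_j' ?eqxx in nz_j.
by rewrite before_j ?eqxx in nz_j'.
Qed.

Lemma no_leading_row_eq0 A i : (forall j, ~~ leading A i j) -> forall j, A i j = 0.
Proof.
move=> no_lead j; apply/eqP/negPn/negP => nz_Aij.
have [m nz_Aim min_m] := @arg_minnP _ j (fun c => A i c != 0) val nz_Aij.
have /negP[] := no_lead m; apply/leadingP; split=> // c lt_cm.
by apply/eqP/negPn/negP => /min_m; rewrite leqNgt lt_cm.
Qed.

Variable A : 'M[F]_n.
Hypothesis leading_eq1 : forall i j : 'I_n, leading A i j -> A i j = 1.
Hypothesis above_leading_eq0 :
  forall i i' j : 'I_n, (i < i')%N -> leading A i' j -> A i j = 0.

Lemma leading_col_uniq i i' j : leading A i j -> leading A i' j -> i = i'.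
Proof.
move=> lead_ij lead_i'j.
have /leadingP[nz_ij _] := lead_ij; have /leadingP[nz_i'j _] := lead_i'j.
have [lt_ii' | lt_i'i | /val_inj //] := ltngtP i i'.
  by rewrite (above_leading_eq0 lt_ii' lead_i'j) eqxx in nz_ij.
by rewrite (above_leading_eq0 lt_i'i lead_ij) eqxx in nz_i'j.
Qed.

Definition leading_mx : 'M[F]_n := \matrix_(i, j) (leading A i j)%:R.

Definition leading_rows_mx : 'M[F]_n :=
  \matrix_(j, k) if [pick i | leading A i j] is Some i then A i k else (j == k)%:R.

Lemma leading_mx_subperm : subperm_mx leading_mx.
Proof.
split; first by move=> i j; rewrite mxE; case: leading; [right | left].
have nz_entry i j : ((leading A i j)%:R != 0 :> F) = leading A i j.
  by case: leading; rewrite ?oner_neq0 ?eqxx.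
split=> [i j j' | i i' j]; rewrite !mxE !nz_entry.
  exact: leading_row_uniq.
exact: leading_col_uniq.
Qed.

Lemma leading_rows_mx_inU : inU leading_rows_mx.
Proof.
split=> [j k lt_kj | j]; rewrite mxE; case: pickP => [i /leadingP[nz_ij before_j] | _].
- exact: before_j.
- by rewrite -[j == k]val_eqE /= gtn_eqF.
- by apply: leading_eq1; apply/leadingP.
- by rewrite eqxx.
Qed.

Lemma leading_mx_mulE : A = leading_mx *m leading_rows_mx.
Proof.
apply/matrixP => i k; case: (pickP (leading A i)) => [j lead_ij | no_lead].
  rewrite (mulmx_subperm_row _ _ leading_mx_subperm (l := j)); last first.
    by rewrite mxE lead_ij oner_neq0.
  rewrite mxE; case: pickP => [i' lead_i'j | /(_ i)]; last by rewrite lead_ij.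
  by rewrite (leading_col_uniq lead_i'j lead_ij).
rewrite (no_leading_row_eq0 (fun j => negbT (no_lead j))) mxE big1 // => j _.
by rewrite mxE no_lead mul0r.
Qed.

End LeadingEntries.

Section BelitskiiOrder.
Variable n : nat.
Local Notation s := (bel_positions n).
Implicit Types x y : 'I_n * 'I_n.

Definition bel_lt x y : bool :=
  (y.1 < x.1)%N || (x.1 == y.1 :> nat) && (x.2 < y.2)%N.

Lemma bel_lt_irr x : bel_lt x x = false.
Proof. by rewrite /bel_lt !ltnn andbF. Qed.

Lemma bel_lt_asym x y : bel_lt x y -> bel_lt y x = false.
Proof.
rewrite /bel_lt => /orP[lt_yx | /andP[/eqP eq_xy lt_xy]].
  by rewrite ltnNge (ltnW lt_yx) /= (ltn_eqF lt_yx).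
by rewrite eq_xy ltnn eqxx /= ltnNge (ltnW lt_xy).
Qed.

Lemma mem_bel_positions x : (x \in s) = (x.1 < x.2)%N.
Proof.
apply/allpairsPdep/idP => [[i [j [_ + ->]]] | lt_x]; first by rewrite mem_filter => /andP[].
by exists x.1, x.2; rewrite mem_rev mem_enum mem_filter mem_enum lt_x; case: x lt_x.
Qed.

Lemma bel_positions_pairwise : pairwise bel_lt s.
Proof.
have ltn_sorted : sorted ltn [seq val i | i <- enum 'I_n].
  by rewrite val_enum_ord iota_ltn_sorted.
have : pairwise (fun i j : 'I_n => (j < i)%N) (rev (enum 'I_n)).
  rewrite -sorted_pairwise; first by rewrite rev_sorted; move: ltn_sorted; rewrite sorted_map.
  by move=> i j k /= lt_ji lt_kj; apply: ltn_trans lt_kj lt_ji.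
rewrite /bel_positions; elim: (rev _) => [|i l IHl] //= /andP[gt_i pw_l].
rewrite pairwise_cat IHl // andbT; apply/andP; split.
  apply/allrelP => _ _ /mapP[j _ ->] /allpairsPdep[i' [j' [l_i' _ ->]]].
  by rewrite /bel_lt /= (allP gt_i).
rewrite pairwise_map; apply: pairwise_filter.
move: ltn_sorted; rewrite sorted_map sorted_pairwise; last exact: ltn_trans.
by apply: sub_pairwise => j k /= lt_jk; rewrite /bel_lt /= ltnn eqxx.
Qed.

Lemma index_bel_positions_lt x y : x \in s -> y \in s ->
  (index x s < index y s)%N = bel_lt x y.
Proof.
move=> s_x s_y; have /(pairwiseP x) pw := bel_positions_pairwise.
have ix : (index x s < size s)%N by rewrite index_mem.
have iy : (index y s < size s)%N by rewrite index_mem.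
apply/idP/idP => [lt_xy | bel_xy]; first by have := pw _ _ ix iy lt_xy; rewrite !nth_index.
have [// | lt_yx | eq_xy] := ltngtP.
  by have := pw _ _ iy ix lt_yx; rewrite !nth_index // bel_lt_asym.
by move: bel_xy; rewrite -(nth_index x s_x) eq_xy nth_index // bel_lt_irr.
Qed.

Lemma mem_take_bel_positions m x : (x \in take m s) = (x \in s) && (index x s < m)%N.
Proof.
have [s_x | s'x] := boolP (x \in s); first by rewrite in_take.
by apply: contraNF s'x; apply: mem_take.
Qed.

Lemma take_bel_lt_closed m x y : x \in s -> bel_lt x y -> y \in take m s -> x \in take m s.
Proof.
rewrite !mem_take_bel_positions => s_x lt_xy /andP[s_y lt_ym].
by rewrite s_x (ltn_trans _ lt_ym) ?index_bel_positions_lt.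
Qed.

Lemma take_before_index j x y : y \in s -> (j < index y s)%N -> x \in take j.+1 s ->
  bel_lt x y.
Proof.
rewrite mem_take_bel_positions => s_y lt_jy /andP[s_x le_xj].
by rewrite -index_bel_positions_lt // (leq_ltn_trans _ lt_jy).
Qed.

End BelitskiiOrder.

Section BelitskiiRun.
Variables (F : fieldType) (n : nat) (A0 : 'M[F]_n) (As : nat -> 'M[F]_n)
  (Gs : nat -> 'M[F]_n -> Prop) (Ainf : 'M[F]_n).
Hypotheses (A0_N : inN A0) (run : belitskii_run A0 As Gs Ainf).
Local Notation s := (bel_positions n).
Local Notation N := (size (bel_positions n)).
Implicit Types p q r : 'I_n.

Definition reachable k (p q : 'I_n) (x : F) : Prop :=
  exists C, gsim (Gs k) (As k) C /\ C p q = x.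

Lemma onth_bel_positions k : (k < N)%N -> exists p q, onth s k = Some (p, q).
Proof. by rewrite -onthTE; case: onth => [[p q] _|//]; exists p, q. Qed.

Lemma GsS k g : (k < N)%N -> Gs k.+1 g <-> Gs k g /\
  forall p q, (p, q) \in take k.+1 s -> (g *m As k.+1 *m invmx g) p q = As k.+1 p q.
Proof.
case/onth_bel_positions => p [q onth_k]; case: run => _ [_ [step _]].
by have [_ [_ [_ ->]]] := step k p q onth_k.
Qed.

Lemma GsE k g : (k <= N)%N -> Gs k g <-> inB g /\ forall j p q, (j < k)%N ->
  (p, q) \in take j.+1 s -> (g *m As j.+1 *m invmx g) p q = As j.+1 p q.
Proof.
elim: k => [_ | k IHk lt_kN].
  by case: run => _ [-> _]; split=> [// | [//]].
rewrite GsS // IHk; last exact: ltnW.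
split=> [[[Bg fix_lt] fix_k] | [Bg fix_le]].
  split=> // j p q; rewrite ltnS leq_eqVlt => /orP[/eqP -> | ]; [exact: fix_k | exact: fix_lt].
by split; [split=> // j p q /leqW; apply: fix_le | move=> p q; apply: fix_le].
Qed.

Lemma Gs_inB k g : (k <= N)%N -> Gs k g -> inB g.
Proof. by move=> le_kN /(GsE g le_kN)[]. Qed.

Lemma As_step k : (k < N)%N -> As k.+1 = As k \/ gsim (Gs k) (As k) (As k.+1).
Proof.
case/onth_bel_positions => p [q onth_k]; case: run => _ [_ [step _]].
have [case_a [case_b [case_c _]]] := step k p q onth_k.
have [const_or_all | not_const_or_all] :=
  classic ((forall x, reachable k p q x -> x = 0) \/ (forall x, reachable k p q x)).
  by right; case: (case_a const_or_all).
have [units | not_units] := classic (forall x, reachable k p q x <-> x != 0).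
  by right; case: (case_b not_const_or_all units).
by left; apply: case_c.
Qed.

Lemma As_inN k : (k <= N)%N -> inN (As k).
Proof.
elim: k => [_ | k IHk lt_kN]; first by case: run => ->.
have [-> | [g [Gg ->]]] := As_step lt_kN; first exact: IHk (ltnW _).
exact: inN_conj (Gs_inB (ltnW lt_kN) Gg) (IHk (ltnW lt_kN)).
Qed.

Lemma Ainf_As : Ainf = As N.
Proof. by case: run => _ [_ [_ ->]]. Qed.

Lemma Ainf_inN : inN Ainf.
Proof. by rewrite Ainf_As; apply: As_inN. Qed.

Lemma As_fixed k p q : (k < N)%N -> (p, q) \in take k s -> As k.+1 p q = As k p q.
Proof.
move=> lt_kN pq_k; have [-> // | [g [Gg ->]]] := As_step lt_kN.
case: k lt_kN pq_k Gg => [|k] lt_kN; first by rewrite take0.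
by move=> pq_k /(GsE g (ltnW lt_kN)) [_ fix_le]; apply: fix_le.
Qed.

Lemma Ainf_take k p q : (k <= N)%N -> (p, q) \in take k s -> Ainf p q = As k p q.
Proof.
move=> le_kN pq_k; rewrite Ainf_As.
suff fixed m : (k <= m <= N)%N -> As m p q = As k p q by apply: fixed; rewrite le_kN /=.
elim: m => [|m IHm] /andP[le_km le_mN]; first by move: le_km; rewrite leqn0 => /eqP->.
move: le_km; rewrite leq_eqVlt ltnS => /orP[/eqP-> // | le_km].
rewrite As_fixed ?IHm ?le_km ?(ltnW le_mN) //.
by move: pq_k; rewrite -(take_takel s le_km) => /mem_take.
Qed.

Lemma onth_index_bel_positions p q : (p < q)%N -> onth s (index (p, q) s) = Some (p, q).
Proof.
move=> lt_pq; have s_pq : (p, q) \in s by rewrite mem_bel_positions.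
by rewrite onthE (nth_map (p, q)) ?index_mem ?nth_index.
Qed.

Lemma Ainf_step_entry p q : (p < q)%N -> Ainf p q = As (index (p, q) s).+1 p q.
Proof.
move=> lt_pq; have s_pq : (p, q) \in s by rewrite mem_bel_positions.
apply: Ainf_take; first by move: s_pq; rewrite -index_mem.
by rewrite mem_take_bel_positions s_pq /=.
Qed.

Lemma reachable_all_eq0 p q : (p < q)%N ->
  (forall x, reachable (index (p, q) s) p q x) -> Ainf p q = 0.
Proof.
move=> lt_pq all_x; case: run => _ [_ [step _]].
have [case_a _] := step _ _ _ (onth_index_bel_positions lt_pq).
by have [_ <-] := case_a (or_intror all_x); apply: Ainf_step_entry.
Qed.

Lemma reachable_scaled_eq1 p q : (p < q)%N -> Ainf p q != 0 ->
  (forall x, x != 0 -> reachable (index (p, q) s) p q (x * As (index (p, q) s) p q)) ->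
  Ainf p q = 1.
Proof.
set k := index (p, q) s => lt_pq nz_pq scaled; case: run => _ [_ [step _]].
have [case_a [case_b [case_c _]]] := step k p q (onth_index_bel_positions lt_pq).
rewrite Ainf_step_entry // in nz_pq *.
have [const_or_all | not_const_or_all] :=
  classic ((forall x, reachable k p q x -> x = 0) \/ (forall x, reachable k p q x)).
  by have [_ As_pq] := case_a const_or_all; rewrite As_pq eqxx in nz_pq.
have [units | not_units] := classic (forall x, reachable k p q x <-> x != 0).
  by have [_ ->] := case_b not_const_or_all units.
(* Otherwise the entry is left unchanged, hence nonzero, so every nonzero value
   is reachable and we would be in case (b). *)
have nz_As_pq : As k p q != 0 by rewrite -(case_c not_const_or_all not_units).
have reach_nz y : y != 0 -> reachable k p q y.
  by move=> nz_y; rewrite -[y](divfK nz_As_pq); apply: scaled; rewrite mulf_neq0 ?invr_eq0.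
exfalso; apply: not_units => x; split=> [reach_x | /reach_nz //].
apply/eqP => x0; apply: not_const_or_all; right => y.
by have [-> | /reach_nz //] := eqVneq y 0; rewrite -x0.
Qed.

Lemma transvection_in_Gs p q r t : (p < q)%N -> (p < r)%N ->
  (forall c : 'I_n, (c < q)%N -> Ainf r c = 0) -> Gs (index (p, q) s) (transvection p r t).
Proof.
move=> lt_pq lt_pr row_r; have s_pq : (p, q) \in s by rewrite mem_bel_positions.
have le_kN : (index (p, q) s <= N)%N by rewrite ltnW // index_mem.
apply/(GsE _ le_kN); split=> [|j a b lt_jk ab_j]; first exact: transvection_inB.
have le_jN : (j.+1 <= N)%N := leq_trans lt_jk le_kN.
have /= bel_ab := take_before_index s_pq lt_jk ab_j.
have le_pa : (p <= a)%N by case/orP: bel_ab => [/ltnW // | /andP[/eqP <-]].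
have N_j := As_inN le_jN; rewrite conj_transvection //.
have [eq_ap | _] := eqVneq a p; last by rewrite mul0r addr0.
have lt_bq : (b < q)%N by move: bel_ab; rewrite /bel_lt eq_ap ltnn eqxx.
rewrite (_ : As j.+1 r b = 0) ?mulr0 ?addr0 //.
have [le_br | lt_rb] := leqP b r; first exact: As_inN.
have rb_j : (r, b) \in take j.+1 s.
  apply: take_bel_lt_closed ab_j; first by rewrite mem_bel_positions.
  by rewrite /bel_lt eq_ap /= lt_pr.
by rewrite -Ainf_take // row_r.
Qed.

Lemma scaling_in_Gs p q x : (p < q)%N -> x != 0 ->
  (forall c : 'I_n, (c < q)%N -> Ainf p c = 0) -> Gs (index (p, q) s) (scaling p x).
Proof.
move=> lt_pq nz_x row_p; have s_pq : (p, q) \in s by rewrite mem_bel_positions.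
have le_kN : (index (p, q) s <= N)%N by rewrite ltnW // index_mem.
apply/(GsE _ le_kN); split=> [|j a b lt_jk ab_j]; first exact: scaling_inB.
have le_jN : (j.+1 <= N)%N := leq_trans lt_jk le_kN.
have /= bel_ab := take_before_index s_pq lt_jk ab_j.
have le_pa : (p <= a)%N by case/orP: bel_ab => [/ltnW // | /andP[/eqP <-]].
have lt_ab : (a < b)%N by rewrite -(mem_bel_positions (a, b)) (mem_take ab_j).
rewrite conj_scaling // -[b == p]val_eqE /= gtn_eqF ?(leq_ltn_trans le_pa lt_ab) // mulr1.
have [eq_ap | _] := eqVneq a p; last by rewrite mul1r.
have lt_bq : (b < q)%N by move: bel_ab; rewrite /bel_lt eq_ap ltnn eqxx.
by rewrite -Ainf_take // eq_ap row_p ?mulr0.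
Qed.

Lemma run_above_leading_eq0 p r q : (p < r)%N -> leading Ainf r q -> Ainf p q = 0.
Proof.
move=> lt_pr /leadingP[nz_rq row_r].
have [le_qp | lt_pq] := leqP q p; first exact: Ainf_inN.
set k := index (p, q) s; have s_pq : (p, q) \in s by rewrite mem_bel_positions.
have le_kN : (k <= N)%N by rewrite ltnW // index_mem.
have lt_rq := inN_neq0_lt Ainf_inN nz_rq.
have rq_k : (r, q) \in take k s.
  rewrite mem_take_bel_positions mem_bel_positions lt_rq.
  by rewrite index_bel_positions_lt ?mem_bel_positions // /bel_lt /= lt_pr.
have nz_As_rq : As k r q != 0 by rewrite -Ainf_take.
apply: (reachable_all_eq0 lt_pq) => x; pose t := (x - As k p q) / As k r q.
exists (transvection p r t *m As k *m invmx (transvection p r t)); split.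
  by exists (transvection p r t); split=> //; apply: transvection_in_Gs.
have N_k := As_inN le_kN.
by rewrite conj_transvection // eqxx mul1r /t divfK // addrC subrK.
Qed.

Lemma run_leading_eq1 p q : leading Ainf p q -> Ainf p q = 1.
Proof.
move=> /leadingP[nz_pq row_p].
have lt_pq := inN_neq0_lt Ainf_inN nz_pq.
apply: reachable_scaled_eq1 => // x nz_x.
exists (scaling p x *m As (index (p, q) s) *m invmx (scaling p x)); split.
  by exists (scaling p x); split=> //; apply: scaling_in_Gs.
by rewrite conj_scaling // eqxx -[q == p]val_eqE /= gtn_eqF // mulr1.
Qed.

End BelitskiiRun.

Unset Implicit Arguments.
Set Strict Implicit.

Theorem theorem2p5 (F : fieldType) (n : nat) (A Q : 'M[F]_n) :
  inN A -> belitskii_canonical A ->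
  subperm_mx Q ->
  (exists B B' : 'M[F]_n, inB B /\ inB B' /\ A = B *m Q *m B') ->
  exists U : 'M[F]_n, inU U /\ A = Q *m U.
Proof.
move=> _ [A0 [As [Gs [A0_N run]]]] sQ [B [B' [BB [BB' def_A]]]].
have leading_eq1 := run_leading_eq1 A0_N run.
have above_leading_eq0 := run_above_leading_eq0 A0_N run.
have A_PU := leading_mx_mulE above_leading_eq0.
have UU := leading_rows_mx_inU leading_eq1.
have BC : inB (leading_rows_mx A *m invmx B') := inB_mul (inU_inB UU) (inB_inv BB').
have <- : leading_mx A = Q.
  apply: subperm_mx_double_coset_eq (leading_mx_subperm above_leading_eq0) sQ BB BC _.
  by rewrite mulmxA -A_PU def_A mulmxK //; case: BB'.
by exists (leading_rows_mx A).
Qed.
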